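(* Let $(\mathrm{Con},\sqsubseteq,(s_i)_{i \in G})$ be a spatial constraint system and let $(\Delta_I)_{I \subseteq G}$ be its distributed spaces. Suppose that $(\mathrm{Con},\sqsubseteq)$ is completely distributive. Let $\delta^+_K:\mathrm{Con} \to \mathrm{Con}$, with $K\subseteq G$, be defined by \[ \delta^+_K(c) = \bigwedge\left\{ \bigsqcup_{k \in K} s_k(a_k) \;\middle|\; (a_k)_{k \in K} \in \mathrm{Con}^K \text{ and } \bigsqcup_{k \in K} a_k \sqsupseteq c \right\}. \] Then $\Delta_K = \delta^+_K$.
   Context: A constraint system is a complete lattice $(\mathrm{Con}, \sqsubseteq)$ with join $\sqcup$ (and $\bigsqcup$ for arbitrary joins), bottom $\mathit{true}$; $\bigwedge$ denotes the greatest lower bound (meet) of a set in $(\mathrm{Con},\sqsubseteq)$, and $c \sqsupseteq d$ means $d \sqsubseteq c$. A space function is a continuous self-map $f:\mathrm{Con}\to\mathrm{Con}$ (preserving joins of directed sets) with $f(\mathit{true})=\mathit{true}$ and $f(c \sqcup d) = f(c) \sqcup f(d)$. A spatial constraint system equips $\mathrm{Con}$ with a space function $s_i$ for each agent $i$ of a possibly infinite set $G$. Space functions are ordered pointwise: $f \sqsubseteq g$ iff $f(c) \sqsubseteq g(c)$ for all $c$; the set of space functions is a complete lattice under this order. The distributed space of a group $I \subseteq G$ is $\Delta_I = \max\{ f \text{ space function} \mid f \sqsubseteq s_i \text{ for every } i \in I\}$. $\mathrm{Con}^K$ is the set of functions $K \to \mathrm{Con}$. Complete distributivity: for any doubly indexed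 family $\{x_{ij}\}_{i\in I, j \in J_i}$, $\bigsqcup_{i\in I}\bigwedge_{j\in J_i} x_{ij} = \bigwedge_{f\in F}\bigsqcup_{i \in I} x_{i f(i)}$, with $F$ the choice functions $f(i)\in J_i$. *)

Set Implicit Arguments.

Record CompleteLattice := {
  carrier :> Type;
  le : carrier -> carrier -> Prop;
  sup : (carrier -> Prop) -> carrier;
  le_refl : forall x, le x x;
  le_trans : forall x y z, le x y -> le y z -> le x z;
  le_antisym : forall x y, le x y -> le y x -> x = y;
  sup_ub : forall (S : carrier -> Prop) x, S x -> le x (sup S);
  sup_least : forall (S : carrier -> Prop) y,
      (forall x, S x -> le x y) -> le (sup S) y
}.

Section Defs.
Variable L : CompleteLattice.

Definition join (a b : L) : L := sup L (fun x => x = a \/ x = b).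
Definition bot : L := sup L (fun _ => False).
Definition inf (S : L -> Prop) : L := sup L (fun y => forall x, S x -> le L y x).

Definition bigsup (I : Type) (F : I -> L) : L := sup L (fun x => exists i, x = F i).
Definition biginf (I : Type) (F : I -> L) : L := inf (fun x => exists i, x = F i).

Definition directed (D : L -> Prop) : Prop :=
  (exists x, D x) /\
  forall x y, D x -> D y -> exists z, D z /\ le L x z /\ le L y z.

Definition continuous (f : L -> L) : Prop :=
  forall D, directed D -> f (sup L D) = sup L (fun y => exists x, D x /\ y = f x).

Definition space_function (f : L -> L) : Prop :=
  continuous f /\ f bot = bot /\ forall c d, f (join c d) = join (f c) (f d).

Definition fle (f g : L -> L) : Prop := forall c, le L (f c) (g c).

Definition completely_distributive : Prop :=
  forall (I : Type) (J : I -> Type) (x : forall i, J i -> L),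
    bigsup (fun i => biginf (x i)) =
    biginf (fun f : (forall i, J i) => bigsup (fun i => x i (f i))).

Definition is_distributed_space (G : Type) (s : G -> L -> L)
    (I : G -> Prop) (D : L -> L) : Prop :=
  (space_function D /\ forall i, I i -> fle D (s i)) /\
  forall f, space_function f -> (forall i, I i -> fle f (s i)) -> fle f D.

Definition delta_plus (G : Type) (s : G -> L -> L) (K : G -> Prop) (c : L) : L :=
  inf (fun v => exists a : {k : G | K k} -> L,
         v = bigsup (fun k => s (proj1_sig k) (a k)) /\
         le L c (bigsup a)).

End Defs.

Arguments space_function {L} f.
Arguments is_distributed_space {L G} s I D.
Arguments delta_plus {L G} s K c.
Arguments fle {L} f g.

(** A space function [f] below every [s_k] is below [δ⁺_K]: if [c ⊑ ⨆_k a_k]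
    then [f c ⊑ ⨆_k f a_k ⊑ ⨆_k s_k a_k]; and [δ⁺_K ⊑ s_i] for [i ∈ K], using
    the family concentrated at [i]. The content is that [δ⁺_K] is itself a
    space function, i.e. preserves all joins. By complete distributivity
    [⨆_i δ⁺_K(c_i)] is the meet, over all choices of families [a^i] with
    [⨆_k a^i_k ⊒ c_i], of [⨆_i ⨆_k s_k(a^i_k)]; this equals [⨆_k s_k(⨆_i a^i_k)]
    because space functions preserve arbitrary joins, and [⨆_i a^i] is a
    family whose join is above [⨆_i c_i], so the meet is above [δ⁺_K(⨆_i c_i)]. *)

From Stdlib Require Import List.

Section Lattice.
Variable L : CompleteLattice.
Local Notation le := (le L).

Lemma bot_le (x : L) : le (bot L) x.
Proof. apply sup_least. intros y []. Qed.

Lemma join_l (a b : L) : le a (join L a b).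
Proof. apply sup_ub. left; reflexivity. Qed.

Lemma join_r (a b : L) : le b (join L a b).
Proof. apply sup_ub. right; reflexivity. Qed.

Lemma join_least (a b z : L) : le a z -> le b z -> le (join L a b) z.
Proof. intros Ha Hb. apply sup_least. intros x [-> | ->]; assumption. Qed.

Lemma join_mono (a b c d : L) : le a c -> le b d -> le (join L a b) (join L c d).
Proof.
  intros Hac Hbd. apply join_least.
  - apply (le_trans _ _ _ _ Hac), join_l.
  - apply (le_trans _ _ _ _ Hbd), join_r.
Qed.

Lemma inf_lb (S : L -> Prop) (x : L) : S x -> le (inf L S) x.
Proof. intros Hx. apply sup_least. intros y Hy. exact (Hy x Hx). Qed.

Lemma inf_glb (S : L -> Prop) (y : L) : (forall x, S x -> le y x) -> le y (inf L S).
Proof. intros H. apply sup_ub. exact H. Qed.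

Lemma bigsup_ub {I : Type} (F : I -> L) (i : I) : le (F i) (bigsup L F).
Proof. apply sup_ub. exists i; reflexivity. Qed.

Lemma bigsup_least {I : Type} (F : I -> L) (z : L) :
  (forall i, le (F i) z) -> le (bigsup L F) z.
Proof. intros H. apply sup_least. intros x [i ->]. apply H. Qed.

Lemma bigsup_mono {I : Type} (F F' : I -> L) :
  (forall i, le (F i) (F' i)) -> le (bigsup L F) (bigsup L F').
Proof.
  intros H. apply bigsup_least. intros i.
  apply (le_trans _ _ _ _ (H i)), bigsup_ub.
Qed.

Lemma biginf_lb {I : Type} (F : I -> L) (i : I) : le (biginf L F) (F i).
Proof. apply inf_lb. exists i; reflexivity. Qed.

Lemma biginf_glb {I : Type} (F : I -> L) (y : L) :
  (forall i, le y (F i)) -> le y (biginf L F).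
Proof. intros H. apply inf_glb. intros x [i ->]. apply H. Qed.

Definition image_of (f : L -> L) (S : L -> Prop) (y : L) : Prop :=
  exists x, S x /\ y = f x.

Lemma space_function_mono {f : L -> L} {c d : L} :
  space_function f -> le c d -> le (f c) (f d).
Proof.
  intros [_ [_ f_join]] Hcd.
  assert (E : join L c d = d).
  { apply le_antisym; [apply join_least; [exact Hcd | apply le_refl] | apply join_r]. }
  rewrite <- E, f_join. apply join_l.
Qed.

Definition join_list (l : list L) : L := fold_right (join L) (bot L) l.

Definition finite_joins (S : L -> Prop) (y : L) : Prop :=
  exists l, Forall S l /\ y = join_list l.

Lemma join_list_app_l (l1 l2 : list L) : le (join_list l1) (join_list (l1 ++ l2)).
Proof.
  induction l1 as [|a l1 IH]; simpl.
  - apply bot_le.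
  - apply join_mono; [apply le_refl | exact IH].
Qed.

Lemma join_list_app_r (l1 l2 : list L) : le (join_list l2) (join_list (l1 ++ l2)).
Proof.
  induction l1 as [|a l1 IH]; simpl.
  - apply le_refl.
  - apply (le_trans _ _ _ _ IH), join_r.
Qed.

Lemma finite_joins_directed (S : L -> Prop) : directed L (finite_joins S).
Proof.
  split.
  - exists (bot L), nil. split; [constructor | reflexivity].
  - intros x y [l1 [H1 ->]] [l2 [H2 ->]]. exists (join_list (l1 ++ l2)). split.
    + exists (l1 ++ l2). split; [apply Forall_app; auto | reflexivity].
    + split; [apply join_list_app_l | apply join_list_app_r].
Qed.

Lemma sup_le_sup_finite_joins (S : L -> Prop) : le (sup L S) (sup L (finite_joins S)).
Proof.
  apply sup_least. intros x Sx.
  apply (le_trans _ _ _ _ (join_l x (bot L))), sup_ub.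
  exists (x :: nil). split; [constructor; auto | reflexivity].
Qed.

Lemma space_function_join_list {f : L -> L} {S : L -> Prop} {l : list L} {z : L} :
  space_function f -> (forall x, S x -> le (f x) z) -> Forall S l ->
  le (f (join_list l)) z.
Proof.
  intros [_ [f_bot f_join]] Hz Hl.
  induction Hl as [|a l Sa _ IH]; simpl.
  - rewrite f_bot. apply bot_le.
  - rewrite f_join. apply join_least; auto.
Qed.

(* A space function preserves arbitrary joins: they are directed joins of finite ones. *)
Lemma space_function_sup_le (f : L -> L) (S : L -> Prop) (z : L) :
  space_function f -> (forall x, S x -> le (f x) z) -> le (f (sup L S)) z.
Proof.
  intros Hf Hz.
  apply (le_trans _ _ _ _ (space_function_mono Hf (sup_le_sup_finite_joins S))).
  rewrite (proj1 Hf _ (finite_joins_directed S)).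
  apply sup_least. intros y [x [[l [Hl ->]] ->]].
  exact (space_function_join_list Hf Hz Hl).
Qed.

Lemma space_function_of_sup_le (f : L -> L) :
  (forall c d, le c d -> le (f c) (f d)) ->
  (forall S, le (f (sup L S)) (sup L (image_of f S))) ->
  space_function f.
Proof.
  intros f_mono f_sup. split; [|split].
  - intros D _. apply le_antisym; [apply f_sup |].
    apply sup_least. intros y [x [Dx ->]]. apply f_mono, sup_ub, Dx.
  - apply le_antisym; [| apply bot_le].
    apply (le_trans _ _ _ _ (f_sup (fun _ => False))).
    apply sup_least. intros y [x [[] _]].
  - intros c d. apply le_antisym.
    + apply (le_trans _ _ _ _ (f_sup _)).
      apply sup_least. intros y [x [[-> | ->] ->]]; [apply join_l | apply join_r].
    + apply join_least; apply f_mono; [apply join_l | apply join_r].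
Qed.

End Lattice.

Arguments image_of {L} f S y.
Arguments space_function_mono {L f c d}.

Section DeltaPlus.
Variables (L : CompleteLattice) (G : Type) (s : G -> L -> L) (K : G -> Prop).
Hypothesis s_space : forall i, space_function (s i).
Local Notation le := (le L).
Local Notation agent := {k : G | K k}.
Local Notation delta := (delta_plus s K).

Definition space_join (a : agent -> L) : L :=
  bigsup L (fun k => s (proj1_sig k) (a k)).

Definition cover (c : L) : Type := {a : agent -> L | le c (bigsup L a)}.

Lemma delta_plus_le_space_join (c : L) (a : agent -> L) :
  le c (bigsup L a) -> le (delta c) (space_join a).
Proof. intros Ha. apply inf_lb. exists a. split; [reflexivity | exact Ha]. Qed.

Lemma delta_plus_mono (c d : L) : le c d -> le (delta c) (delta d).
Proof.
  intros Hcd. apply inf_glb. intros v [a [-> Ha]].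
  apply delta_plus_le_space_join, (le_trans _ _ _ _ Hcd), Ha.
Qed.

Lemma biginf_cover_le_delta_plus (c : L) :
  le (biginf L (fun a : cover c => space_join (proj1_sig a))) (delta c).
Proof.
  apply inf_glb. intros v [a [-> Ha]].
  exact (biginf_lb L (fun a : cover c => space_join (proj1_sig a)) (exist _ a Ha)).
Qed.

Lemma space_join_bigsup (I : Type) (a : I -> agent -> L) :
  le (space_join (fun k => bigsup L (fun i => a i k)))
     (bigsup L (fun i => space_join (a i))).
Proof.
  apply bigsup_least. intros k.
  apply space_function_sup_le; [apply s_space |]. intros y [i ->].
  apply (le_trans _ _ _ _ (bigsup_ub L (fun k => s (proj1_sig k) (a i k)) k)).
  apply (bigsup_ub L (fun i => space_join (a i)) i).
Qed.

Hypothesis L_distributive : completely_distributive L.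

Lemma delta_plus_sup_le (S : L -> Prop) :
  le (delta (sup L S)) (sup L (image_of delta S)).
Proof.
  set (I := {x : L | S x}).
  set (J := fun i : I => cover (proj1_sig i)).
  set (X := fun (i : I) (a : J i) => space_join (proj1_sig a)).
  assert (meet_of_choices :
    le (delta (sup L S)) (biginf L (fun f : forall i, J i => bigsup L (fun i => X i (f i))))).
  { apply biginf_glb. intros f.
    apply (le_trans _ _
      (space_join (fun k => bigsup L (fun i => proj1_sig (f i) k)))).
    - apply delta_plus_le_space_join, sup_least. intros x Sx.
      apply (le_trans _ _ _ _ (proj2_sig (f (exist _ x Sx)))), bigsup_mono.
      intros k. exact (bigsup_ub L (fun i => proj1_sig (f i) k) (exist _ x Sx)).
    - apply space_join_bigsup. }
  rewrite <- (L_distributive I J X) in meet_of_choices.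
  apply (le_trans _ _ _ _ meet_of_choices), bigsup_least. intros [x Sx].
  apply (le_trans _ _ _ _ (biginf_cover_le_delta_plus x)), sup_ub.
  exists x. split; [exact Sx | reflexivity].
Qed.

Lemma delta_plus_space_function : space_function delta.
Proof.
  apply space_function_of_sup_le; [apply delta_plus_mono | apply delta_plus_sup_le].
Qed.

Lemma delta_plus_le_space (i : G) : K i -> fle delta (s i).
Proof.
  intros Ki c.
  (* [c] at agent [i] and [⊥] elsewhere, written as a join since agents need
     not have decidable equality *)
  set (a := fun k : agent => sup L (fun x => x = c /\ proj1_sig k = i)).
  apply (le_trans _ _ (space_join a)).
  - apply delta_plus_le_space_join.
    apply (le_trans _ _ (a (exist _ i Ki))); [| apply bigsup_ub].
    apply sup_ub. split; reflexivity.
  - apply bigsup_least. intros k.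
    apply space_function_sup_le; [apply s_space |].
    intros x [-> <-]. apply le_refl.
Qed.

Lemma space_function_le_delta_plus (f : L -> L) :
  space_function f -> (forall i, K i -> fle f (s i)) -> fle f delta.
Proof.
  intros Hf f_le c. apply inf_glb. intros v [a [-> Ha]].
  apply (le_trans _ _ _ _ (space_function_mono Hf Ha)).
  apply space_function_sup_le; [exact Hf |]. intros x [k ->].
  apply (le_trans _ _ _ _ (f_le _ (proj2_sig k) (a k))).
  exact (bigsup_ub L (fun k => s (proj1_sig k) (a k)) k).
Qed.

End DeltaPlus.

Theorem mainTheorem7 (L : CompleteLattice) (G : Type) (s : G -> L -> L)
    (Hs : forall i, space_function (s i))
    (Hcd : completely_distributive L)
    (K : G -> Prop) :
  is_distributed_space s K (delta_plus s K).
Proof.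
  split; [split |].
  - apply delta_plus_space_function; assumption.
  - apply delta_plus_le_space; assumption.
  - apply space_function_le_delta_plus.
Qed.
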